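(* Suppose that a long theta with apexes $u$ and $v$ is the underlying graph of some oriented graph $G$ derived from a Burling tree $(T,r,\ell,c)$. Then for every hole $H$ of $G$, exactly one of $u$ and $v$ is the pivot of $H$.
   Context: Graphs are finite, without loops or multiple edges; oriented graphs have no pair of opposite arcs. A hole is an induced cycle of length at least $4$. A theta is a graph made of three internally vertex-disjoint paths of length at least $2$, each linking two vertices $u$ and $v$ (the apexes), with no edges other than those of the three paths. A long theta is a theta in which all three paths have length at least $3$. In a rooted tree $T$ with root $r$, each non-root vertex $v$ has a parent $p(v)$; children, leaves, ancestors and descendants are as usual. A branch is a sequence $v_1\dots v_k$ ($k\ge0$) with $v_i$ the parent of $v_{i+1}$; it starts at $v_1$. A Burling tree is a 4-tuple $(T,r,\ell,c)$: $T$ a rooted tree with root $r$; $\ell$ assigns to each non-leaf vertex $v$ one of its children $\ell(v)$ (the last-born of $v$); $c$ assigns to every vertex $v$ that is neither the root nor a last-born the vertex-set of a (possibly empty) branch starting at $\ell(p(v))$, and $c(v)=\emptyset$ if $v$ is the root or a last-born. The oriented graph fully derived from it has vertex-set $V(T)$ and an arc $uv$ iff $v\in c(u)$; an oriented graph is derived from the Burling tree if it is an induced subgraph of the fully derived one. A hole of an oriented graph means a hole of its underlying graph. If $G$ is derived from $T$ and $H$ is a hole of $G$, then (as established in the paper) $H$ with the inherited orientation has exactly two sources, called its antennas, and exactly two sinks; exactly one of these sinks is adjacent to both antennas and is an ancestor in $T$ of all vertices of $H$ other than the antennas: it is the pivot of $H$. *)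

From mathcomp Require Import all_boot.
Set Implicit Arguments. Unset Strict Implicit. Unset Printing Implicit Defensive.

(* Rooted tree on a finite vertex type V: root r, parent function p with
   p r = r (a dummy value) and every vertex reaching r by iterating p. *)

Definition ancestor (V : finType) (p : V -> V) (x y : V) : Prop :=
  exists k, iter k p y = x.

Definition is_child (V : finType) (r : V) (p : V -> V) (w v : V) : bool :=
  (w != r) && (p w == v).

Definition is_branch (V : finType) (r : V) (p : V -> V) (s : seq V) : bool :=
  sorted (fun x y => is_child r p y x) s.

Definition is_last_born (V : finType) (r : V) (p : V -> V) (l : V -> V) (v : V) : Prop :=
  v != r /\ l (p v) = v.

Definition is_burling_tree (V : finType) (r : V) (p : V -> V) (l : V -> V)
    (c : V -> {set V}) : Prop :=
  [/\ p r = r,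
      (forall v, ancestor p r v),
      (forall v w, is_child r p w v -> is_child r p (l v) v),
      (forall v, v != r -> ~ is_last_born r p l v ->
         exists s : seq V, [/\ is_branch r p s,
                              (s = [::] \/ exists s', s = l (p v) :: s') &
                              c v = [set x in s]])
    & (forall v, v = r \/ is_last_born r p l v -> c v = set0)].

Definition arc (V : finType) (c : V -> {set V}) (S : {set V}) (x y : V) : bool :=
  [&& x \in S, y \in S & y \in c x].

Definition uadj (V : finType) (c : V -> {set V}) (S : {set V}) (x y : V) : bool :=
  (x != y) && (arc c S x y || arc c S y x).

(* a hole: an induced cycle of length >= 4, given as a cyclic sequence *)
Definition is_hole (V : finType) (S : {set V}) (adj : rel V) (s : seq V) : Prop :=
  [/\ uniq s, 4 <= size s, {subset s <= S} &
      forall x y, x \in s -> y \in s ->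
        adj x y = ((x, y) \in zip s (rot 1 s)) || ((y, x) \in zip s (rot 1 s))].

Definition path_edge (V : finType) (q : seq V) (x y : V) : bool :=
  ((x, y) \in zip q (behead q)) || ((y, x) \in zip q (behead q)).

(* the graph (S, adj) is a long theta with apexes u and v: three internally
   disjoint u-v paths u :: Pi ++ [:: v], each of length >= 3, and no other edges *)
Definition is_long_theta (V : finType) (S : {set V}) (adj : rel V) (u v : V) : Prop :=
  exists P1 P2 P3 : seq V,
    [/\ [&& 2 <= size P1, 2 <= size P2 & 2 <= size P3],
        uniq (u :: v :: P1 ++ P2 ++ P3),
        S = [set x in u :: v :: P1 ++ P2 ++ P3] &
        forall x y, x \in S -> y \in S ->
          adj x y = [|| path_edge (u :: P1 ++ [:: v]) x y,
                        path_edge (u :: P2 ++ [:: v]) x y |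
                        path_edge (u :: P3 ++ [:: v]) x y]].

Definition hole_source (V : finType) (c : V -> {set V}) (S : {set V}) (s : seq V) (x : V) : Prop :=
  x \in s /\ forall y, y \in s -> ~~ arc c S y x.

Definition hole_sink (V : finType) (c : V -> {set V}) (S : {set V}) (s : seq V) (x : V) : Prop :=
  x \in s /\ forall y, y \in s -> ~~ arc c S x y.

Definition is_pivot (V : finType) (p : V -> V) (c : V -> {set V}) (S : {set V})
    (s : seq V) (x : V) : Prop :=
  [/\ hole_sink c S s x,
      (forall a, hole_source c S s a -> uadj c S x a) &
      (forall y, y \in s -> ~ hole_source c S s y -> ancestor p x y)].

(* Call a vertex [t] of a hole [H] a top of [H] if [t] is a proper ancestor in the
   tree of another vertex of [H]; a vertex of [H] of minimal depth, or one of its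
   neighbours on [H], is always a top. An edge leaving the subtree of a top [t] starts
   at [t] or comes from a vertex with an arc into [t], so walking around [H] shows that
   all vertices of [H] but the two neighbours of [t] descend from [t], and that these
   two neighbours are the only sources and point to [t]: [t] is the unique pivot.
   In a long theta with apexes [u] and [v], if the pivot [t] of a hole lay inside a
   path [P], one antenna would lie inside [P] ([u] and [v] have no common neighbour),
   and its other neighbour on the hole would be a proper descendant of [t] on [P].
   Then [t] is the pivot of both holes through [P], whose sources are therefore on [P].
   An interior vertex of another path has the same neighbours in every hole through
   that path, so the hole formed by the two other paths has no source but [u] and [v],
   and its pivot would be a common neighbour of [u] and [v]. *)

From Pilot Require Import Defs.
From mathcomp Require Import all_boot zify.
Set Implicit Arguments. Unset Strict Implicit. Unset Printing Implicit Defensive.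

Lemma nth_rot1 (T : Type) (x0 : T) (s : seq T) i : i < size s ->
  nth x0 (rot 1 s) i = nth x0 s (i.+1 %% size s).
Proof.
case: s => [|x t] //= lt_it; rewrite rot1_cons nth_rcons.
case: ltnP => [lt_it' | le_ti]; first by rewrite modn_small.
have -> : i = size t by lia.
by rewrite eqxx modnn.
Qed.

Lemma mem_zip_rot1 (T : eqType) (s : seq T) x y : uniq s -> x \in s -> y \in s ->
  ((x, y) \in zip s (rot 1 s)) = (index y s == (index x s).+1 %% size s).
Proof.
move=> uniq_s x_in y_in; have lt_xs : index x s < size s by rewrite index_mem.
have size_zip_rot : size (zip s (rot 1 s)) = size s by rewrite size_zip size_rot minnn.
apply/(nthP (x, y))/eqP => [[i] | yE].
  rewrite size_zip_rot => lt_is; rewrite nth_zip ?size_rot // => -[xE yE].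
  rewrite nth_rot1 // in yE; rewrite -xE -yE !index_uniq ?ltn_pmod //.
  by case: (size s) lt_is.
exists (index x s); first by rewrite size_zip_rot.
by rewrite nth_zip ?size_rot // nth_rot1 // -yE !nth_index.
Qed.

Section UniqSeq.
Variables (T : eqType) (q : seq T).
Hypothesis uniq_q : uniq q.

Lemma mem_zip_behead x y :
  ((x, y) \in zip q (behead q)) = [&& x \in q, y \in q & index y q == (index x q).+1].
Proof.
apply/(nthP (x, y))/and3P => [[i] | [x_in y_in /eqP yE]].
  rewrite size_zip size_behead => lt_i; rewrite nth_zip_cond size_zip size_behead lt_i.
  case=> <- <-; rewrite nth_behead !index_uniq ?mem_nth //; lia.
have := index_mem y q; rewrite y_in yE => lt_y.
exists (index x q); first by rewrite size_zip size_behead; lia.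
rewrite nth_zip_cond size_zip size_behead ifT; last by lia.
by rewrite nth_behead -yE !nth_index.
Qed.

Lemma index_rev x : x \in q -> index x (rev q) = size q - (index x q).+1.
Proof.
move=> x_in; have := index_mem x q; rewrite x_in => lt_x.
have xE : nth x (rev q) (size q - (index x q).+1) = x.
  by rewrite nth_rev; [rewrite (_ : _ - _ = index x q) ?nth_index //; lia | lia].
by rewrite -{1}xE index_uniq ?rev_uniq // size_rev; lia.
Qed.

End UniqSeq.

Lemma zip_rot1_cycle (T : Type) (u v : T) (P Q : seq T) :
  zip (u :: P ++ v :: rev Q) (rot 1 (u :: P ++ v :: rev Q)) =
  zip (u :: P ++ [:: v]) (behead (u :: P ++ [:: v])) ++
  zip (rev (u :: Q ++ [:: v])) (behead (rev (u :: Q ++ [:: v]))).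
Proof.
have zip_rcons s t x : size s = size t -> zip (rcons s x) t = zip s t.
  by move=> eq_st; rewrite -cats1 -[t in LHS]cats0 zip_cat // cats0.
have -> : rev (u :: Q ++ [:: v]) = v :: rcons (rev Q) u by rewrite rev_cons rev_cat.
have -> : rot 1 (u :: P ++ v :: rev Q) = rcons P v ++ rcons (rev Q) u.
  by rewrite rot1_cons rcons_cat cat_rcons.
rewrite -[u :: P ++ _]/((u :: P) ++ _) zip_cat ?size_rcons //=.
by rewrite cats1 -!rcons_cons !zip_rcons ?size_rcons.
Qed.

Lemma uniq_theta_path (T : eqType) (u v : T) (P R : seq T) :
  uniq (u :: v :: P ++ R) -> uniq (u :: P ++ [:: v]).
Proof.
move=> uq; have : uniq ((u :: v :: P) ++ R) := uq.
rewrite cat_uniq (perm_uniq (_ : perm_eq (u :: P ++ [:: v]) (u :: v :: P))) => [/andP [] //|].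
by rewrite perm_cons cats1 perm_rcons.
Qed.

Lemma index_path_end (T : eqType) (u v : T) (P : seq T) :
  uniq (u :: P ++ [:: v]) -> index v (u :: P ++ [:: v]) = (size P).+1.
Proof.
have vE : nth v (u :: P ++ [:: v]) (size P).+1 = v by rewrite /= nth_cat ltnn subnn.
by move=> uq; rewrite -{1}vE index_uniq //= size_cat addn1.
Qed.

Lemma mem_path_cat (T : eqType) (u v x : T) (P : seq T) :
  (x \in u :: P ++ [:: v]) = [|| x == u, x \in P | x == v].
Proof. by rewrite inE mem_cat mem_seq1. Qed.

Lemma mem_cycle_cat (T : eqType) (u v x : T) (P Q : seq T) :
  (x \in u :: P ++ v :: rev Q) = [|| x == u, x \in P, x == v | x \in Q].
Proof. by rewrite !inE mem_cat inE mem_rev. Qed.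

Lemma path_sub_cycle_l (T : eqType) (u v : T) (P Q : seq T) :
  {subset u :: P ++ [:: v] <= u :: P ++ v :: rev Q}.
Proof. by move=> x; rewrite mem_path_cat mem_cycle_cat => /or3P [] ->; rewrite ?orbT. Qed.

Lemma path_sub_cycle_r (T : eqType) (u v : T) (P Q : seq T) :
  {subset u :: Q ++ [:: v] <= u :: P ++ v :: rev Q}.
Proof. by move=> x; rewrite mem_path_cat mem_cycle_cat => /or3P [] ->; rewrite ?orbT. Qed.

(** * Walking around a hole *)

Definition cyc_adj (k i j : nat) : bool :=
  [|| j == i.+1, i == j.+1, (i == 0) && (j == k.-1) | (j == 0) && (i == k.-1)].

Lemma cyc_adjE k i j : i < k -> j < k ->
  (j == i.+1 %% k) || (i == j.+1 %% k) = cyc_adj k i j.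
Proof.
have succ_mod m : m < k -> m.+1 %% k = if m.+1 == k then 0 else m.+1.
  by case: (m.+1 =P k) => [-> | ?] lt_mk; rewrite ?modnn ?modn_small //; lia.
move=> lt_ik lt_jk; rewrite !succ_mod // /cyc_adj.
by case: (i.+1 =P k); case: (j.+1 =P k); lia.
Qed.

Lemma cyc_adjC k i j : cyc_adj k i j = cyc_adj k j i.
Proof. by apply/idP/idP; rewrite /cyc_adj; lia. Qed.

Definition hole_walk (V : finType) (s : seq V) (d : V) (m : nat) : V :=
  nth d s ((index d s + m) %% size s).

Section HoleWalk.
Variables (V : finType) (S : {set V}) (adj : rel V) (s : seq V).
Hypothesis hole : is_hole S adj s.

Local Notation k := (size s).

Lemma hole_size : 4 <= k. Proof. by case: hole. Qed.

Lemma hole_adj_index x y : x \in s -> y \in s ->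
  adj x y = (index y s == (index x s).+1 %% k) || (index x s == (index y s).+1 %% k).
Proof. by case: hole => uniq_s _ _ adjE x_in y_in; rewrite adjE // !mem_zip_rot1. Qed.

Variable d : V.
Hypothesis d_in : d \in s.
Local Notation g := (hole_walk s d).

Lemma index_hole_walk m : index (g m) s = (index d s + m) %% k.
Proof.
have [uniq_s k_ge4 _ _] := hole.
by rewrite index_uniq // ltn_pmod //; lia.
Qed.

Lemma hole_walk0 : g 0 = d.
Proof. by rewrite /hole_walk addn0 modn_small ?nth_index ?index_mem. Qed.

Lemma hole_walk_mem m : g m \in s.
Proof. by rewrite mem_nth // ltn_pmod //; have := hole_size; lia. Qed.

Lemma hole_walk_onto y : y \in s -> exists2 m, m < k & g m = y.
Proof.
move=> y_in; have k_gt0 : 0 < k by have := hole_size; lia.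
have lt_ys : index y s < k by rewrite index_mem.
have lt_ds : index d s < k by rewrite index_mem.
exists ((index y s + (k - index d s)) %% k); first by rewrite ltn_pmod.
rewrite /hole_walk modnDmr addnCA subnKC 1?ltnW //.
by rewrite modnDr modn_small ?nth_index.
Qed.

Lemma hole_walk_inj i j : i < k -> j < k -> g i = g j -> i = j.
Proof.
move=> lt_ik lt_jk /(congr1 (index^~ s)) /eqP.
by rewrite !index_hole_walk eqn_modDl !modn_small // => /eqP.
Qed.

Lemma hole_walk_adj i j : i < k -> j < k -> adj (g i) (g j) = cyc_adj k i j.
Proof.
move=> lt_ik lt_jk; rewrite hole_adj_index ?hole_walk_mem // !index_hole_walk.
have shift a b : b < k ->
    ((index d s + b) %% k == ((index d s + a) %% k).+1 %% k) = (b == a.+1 %% k).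
  by move=> lt_bk; rewrite -addn1 modnDml -addnA addn1 eqn_modDl modn_small.
by rewrite !shift // cyc_adjE.
Qed.

End HoleWalk.

(** * Long thetas *)

Lemma path_edge_mem (T : finType) (q : seq T) x y :
  path_edge q x y -> (x \in q) && (y \in q).
Proof.
have zip_mem a b : (a, b) \in zip q (behead q) -> (a \in q) && (b \in q).
  case/(nthP (a, b)) => i; rewrite size_zip size_behead => lt_i.
  rewrite nth_zip_cond size_zip size_behead lt_i nth_behead => -[<- <-].
  by rewrite !mem_nth //; lia.
by case/orP => /zip_mem /andP [-> ->].
Qed.

Lemma path_edgeE (T : finType) (q : seq T) x y : uniq q -> path_edge q x y =
  [&& x \in q, y \in q & (index y q == (index x q).+1) || (index x q == (index y q).+1)].
Proof. by move=> uniq_q; rewrite /path_edge !mem_zip_behead //; do 2 case: (_ \in q). Qed.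

Lemma path_edge_rev (T : finType) (q : seq T) x y : uniq q ->
  path_edge (rev q) x y = path_edge q x y.
Proof.
move=> uniq_q; rewrite !path_edgeE ?rev_uniq // !mem_rev.
have [x_in | //] := boolP (x \in q); have [y_in | //] := boolP (y \in q).
rewrite !index_rev //; have := index_mem x q; have := index_mem y q; rewrite x_in y_in.
by move=> lt_y lt_x; apply/idP/idP; lia.
Qed.

Lemma path_edge_interior (T : finType) (u v x y : T) (P : seq T) :
  uniq (u :: P ++ [:: v]) -> 0 < size P -> path_edge (u :: P ++ [:: v]) x y ->
  (x \in P) || (y \in P).
Proof.
move=> uq P_gt0; rewrite path_edgeE // !inE !mem_cat !inE.
case/and3P=> /or3P [/eqP-> | -> // | /eqP->] /or3P [/eqP-> | -> | /eqP->];
  rewrite ?orbT // ?index_head ?index_path_end // => idx; exfalso; move: P_gt0 idx;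
  (* [set] identifies the two elaborations of [size P] (over [T] as an eqType and as
     a finType), which lia would otherwise treat as unrelated atoms. *)
  set n := size P; lia.
Qed.

Definition long_theta_paths (V : finType) (S : {set V}) (adj : rel V) (u v : V)
    (P1 P2 P3 : seq V) : Prop :=
  [/\ [&& 2 <= size P1, 2 <= size P2 & 2 <= size P3],
      uniq (u :: v :: P1 ++ P2 ++ P3),
      S = [set x in u :: v :: P1 ++ P2 ++ P3] &
      forall x y, x \in S -> y \in S ->
        adj x y = [|| path_edge (u :: P1 ++ [:: v]) x y,
                      path_edge (u :: P2 ++ [:: v]) x y |
                      path_edge (u :: P3 ++ [:: v]) x y]].

Section LongTheta.
Variables (V : finType) (S : {set V}) (adj : rel V) (u v : V) (P1 P2 P3 : seq V).
Hypothesis theta : long_theta_paths S adj u v P1 P2 P3.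

Lemma long_theta_paths_swap12 : long_theta_paths S adj u v P2 P1 P3.
Proof.
case: theta => sizes uniq_all SE adjE.
have perm : perm_eq (u :: v :: P1 ++ P2 ++ P3) (u :: v :: P2 ++ P1 ++ P3).
  by rewrite !perm_cons perm_catCA.
split; first by case/and3P: sizes => -> -> ->.
- by rewrite -(perm_uniq perm).
- by rewrite SE; apply/setP => x; rewrite !in_set (perm_mem perm).
- by move=> x y x_in y_in; rewrite adjE // orbCA.
Qed.

Lemma long_theta_paths_swap23 : long_theta_paths S adj u v P1 P3 P2.
Proof.
case: theta => sizes uniq_all SE adjE.
have perm : perm_eq (u :: v :: P1 ++ P2 ++ P3) (u :: v :: P1 ++ P3 ++ P2).
  by rewrite !perm_cons perm_cat2l perm_catC.
split; first by case/and3P: sizes => -> -> ->.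
- by rewrite -(perm_uniq perm).
- by rewrite SE; apply/setP => x; rewrite !in_set (perm_mem perm).
- by move=> x y x_in y_in; rewrite adjE // [path_edge (u :: P2 ++ _) x y || _]orbC.
Qed.

Lemma theta_memE x : (x \in S) = [|| x == u, x == v, x \in P1, x \in P2 | x \in P3].
Proof. by case: theta => _ _ -> _; rewrite !inE !mem_cat. Qed.

Lemma theta_apexes_neq : u != v.
Proof. by case: theta => _ /andP [+ _]; rewrite inE negb_or => /andP []. Qed.

Lemma theta_path1_fresh x : x \in P1 -> [&& x != u, x != v, x \notin P2 & x \notin P3].
Proof.
case: theta => _ uniq_all _ _ x_in; move: uniq_all.
rewrite /= !inE !mem_cat !negb_or cat_uniq.
case/and3P=> /and4P [_ u_n1 _ _] /and3P [v_n1 _ _] /and3P [_ /hasPn n23 _].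
have [x_nu x_nv] : x != u /\ x != v.
  by split; [apply: contraNneq _ u_n1 | apply: contraNneq _ v_n1] => <-.
have x_n23 : x \notin P2 ++ P3 by apply: contraL x_in => /n23.
by move: x_n23; rewrite x_nu x_nv mem_cat negb_or.
Qed.

Lemma theta_path1_uniq : uniq (u :: P1 ++ [:: v]).
Proof. by case: theta => _ /uniq_theta_path. Qed.

Lemma theta_path1_edge z y : z \in P1 -> y \in S -> adj z y ->
  path_edge (u :: P1 ++ [:: v]) z y.
Proof.
move=> z_in y_in; have zS : z \in S by rewrite theta_memE z_in !orbT.
have /and4P [z_nu z_nv z_n2 z_n3] := theta_path1_fresh z_in.
have z_off Q : z \notin Q -> path_edge (u :: Q ++ [:: v]) z y = false.
  move=> z_nQ; apply/negbTE/negP => /path_edge_mem /andP [+ _].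
  by rewrite mem_path_cat (negbTE z_nu) (negbTE z_nv) (negbTE z_nQ).
by case: theta => _ _ _ ->; rewrite // (z_off P2) // (z_off P3) // !orbF.
Qed.

Lemma theta_path1_nbr z y : z \in P1 -> y \in S -> adj z y -> y \in u :: P1 ++ [:: v].
Proof. by move=> z_in y_in /(theta_path1_edge z_in y_in) /path_edge_mem /andP []. Qed.

Lemma theta_path1_no_common_nbr w : w \in P1 -> adj w u -> adj w v -> False.
Proof.
move=> w_in; have uS : u \in S by rewrite theta_memE eqxx.
have vS : v \in S by rewrite theta_memE eqxx orbT.
move=> /(theta_path1_edge w_in uS) wu /(theta_path1_edge w_in vS) wv.
have iv : index v (u :: P1 ++ [:: v]) = (size P1).+1 := index_path_end theta_path1_uniq.
have := index_mem w (u :: P1 ++ [:: v]); rewrite /= size_cat addn1 inE mem_cat w_in orbT.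
move: wu wv; rewrite !path_edgeE ?theta_path1_uniq // iv /= eqxx.
move=> /and3P [_ _ wu] /and3P [_ _ wv].
by case: theta => /and3P [le2 _ _] _ _ _; lia.
Qed.

End LongTheta.

Lemma theta_path2_off_path1 (V : finType) (S : {set V}) (adj : rel V) (u v z : V)
    (P1 P2 P3 : seq V) :
  long_theta_paths S adj u v P1 P2 P3 -> z \in P2 -> z \notin u :: P1 ++ [:: v].
Proof.
move=> theta /(theta_path1_fresh (long_theta_paths_swap12 theta)) /and4P [z_nu z_nv z_n1 _].
by rewrite mem_path_cat (negbTE z_nu) (negbTE z_nv) (negbTE z_n1).
Qed.

Lemma theta_cycle12_hole (V : finType) (S : {set V}) (adj : rel V) (u v : V)
    (P1 P2 P3 : seq V) :
  long_theta_paths S adj u v P1 P2 P3 -> is_hole S adj (u :: P1 ++ v :: rev P2).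
Proof.
move=> theta; have uniq2 := theta_path1_uniq (long_theta_paths_swap12 theta).
have uniq3 := theta_path1_uniq (long_theta_paths_swap12 (long_theta_paths_swap23 theta)).
case: theta => /and3P [le2_1 le2_2 le2_3] uniq_all SE adjE.
have perm : perm_eq (u :: P1 ++ v :: rev P2) (u :: v :: P1 ++ P2).
  by rewrite perm_cons -cat1s perm_catCA /= perm_cons perm_cat2l perm_rev.
have C_sub : {subset u :: P1 ++ v :: rev P2 <= u :: v :: P1 ++ P2 ++ P3}.
  by move=> x; rewrite (perm_mem perm) !inE !mem_cat => /or4P [] ->; rewrite ?orbT.
split.
- have : uniq ((u :: v :: P1 ++ P2) ++ P3) by rewrite /= -catA.
  by rewrite (perm_uniq perm) cat_uniq => /andP [].
- by rewrite /= size_cat /= size_rev; lia.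
- by move=> x /C_sub x_in; rewrite SE in_set.
have C_n3 x : x \in u :: P1 ++ v :: rev P2 -> x \notin P3.
  rewrite (perm_mem perm); have : uniq ((u :: v :: P1 ++ P2) ++ P3) by rewrite /= -catA.
  by rewrite cat_uniq => /and3P [_ /hasPn n3 _] x12; apply/negP => /n3; rewrite x12.
move=> x y xC yC; rewrite adjE ?SE ?in_set ?C_sub // zip_rot1_cycle !mem_cat.
have -> : path_edge (u :: P3 ++ [:: v]) x y = false.
  apply/negbTE/negP => /(path_edge_interior uniq3 (ltnW le2_3)).
  by rewrite (negbTE (C_n3 _ xC)) (negbTE (C_n3 _ yC)).
by rewrite orbF -(path_edge_rev _ _ uniq2) /path_edge orbACA.
Qed.

Lemma theta_no_common_nbr (V : finType) (S : {set V}) (adj : rel V) (u v w : V)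
    (P1 P2 P3 : seq V) :
  long_theta_paths S adj u v P1 P2 P3 ->
  w \in S -> w != u -> w != v -> adj w u -> adj w v -> False.
Proof.
move=> theta; rewrite (theta_memE theta) => /or3P [/eqP -> | /eqP -> | ]; rewrite ?eqxx //.
case/or3P=> w_in _ _.
- exact: (theta_path1_no_common_nbr theta w_in).
- exact: (theta_path1_no_common_nbr (long_theta_paths_swap12 theta) w_in).
- have th312 := long_theta_paths_swap12 (long_theta_paths_swap23 theta).
  exact: (theta_path1_no_common_nbr th312 w_in).
Qed.

(** * Rooted trees and Burling trees *)

Section RootedTree.
Variables (V : finType) (r : V) (p : V -> V).
Hypotheses (p_root : p r = r) (ancestor_root : forall x, ancestor p r x).

Local Notation anc := (ancestor p).

Lemma root_reachable x : exists k, iter k p x == r.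
Proof. by have [k <-] := ancestor_root x; exists k. Qed.

Definition depth x := ex_minn (root_reachable x).

Lemma iter_depth x : iter (depth x) p x = r.
Proof. by rewrite /depth; case: ex_minnP => m /eqP. Qed.

Lemma depth_min x k : iter k p x = r -> depth x <= k.
Proof. by rewrite /depth; case: ex_minnP => m _ min_m /eqP; apply: min_m. Qed.

Lemma iter_root k : iter k p r = r.
Proof. exact: iter_fix. Qed.

Lemma depth_eq0 x : (depth x == 0) = (x == r).
Proof.
apply/eqP/eqP => [d0 | ->]; first by have := iter_depth x; rewrite d0.
by apply/eqP; rewrite -leqn0 depth_min.
Qed.

Lemma depth_root : depth r = 0.
Proof. by apply/eqP; rewrite depth_eq0. Qed.

Lemma depth_parent x : depth (p x) = (depth x).-1.
Proof.
have [-> | x_nr] := eqVneq x r.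
  by rewrite p_root depth_root.
rewrite -depth_eq0 in x_nr; apply/eqP; rewrite eqn_leq; apply/andP; split.
  by apply: depth_min; rewrite -iterSr prednK ?lt0n // iter_depth.
by rewrite -ltnS prednK ?lt0n // depth_min // iterSr iter_depth.
Qed.

Lemma depth_iter k x : depth (iter k p x) = depth x - k.
Proof. by elim: k => [|k IHk]; rewrite ?subn0 // iterS depth_parent IHk subnS. Qed.

Lemma depth_child x : x != r -> depth x = (depth (p x)).+1.
Proof. by rewrite -depth_eq0 depth_parent; case: (depth x). Qed.

Lemma ancestor_refl x : anc x x.
Proof. by exists 0. Qed.

Lemma ancestor_trans x y z : anc x y -> anc y z -> anc x z.
Proof. by move=> [i <-] [j <-]; exists (i + j); rewrite iterD. Qed.

Lemma ancestor_parent x : anc (p x) x.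
Proof. by exists 1. Qed.

Lemma ancestor_depth x y : anc x y -> depth x <= depth y.
Proof. by move=> [k <-]; rewrite depth_iter leq_subr. Qed.

Lemma ancestor_depth_eq x y : anc x y -> depth x = depth y -> x = y.
Proof.
move=> [k <-]; rewrite depth_iter => dE.
have [/eqP | y_nr] := eqVneq (depth y) 0; first by rewrite depth_eq0 => /eqP ->; exact: iter_root.
by have -> : k = 0 by lia.
Qed.

Lemma ancestor_antisym x y : anc x y -> anc y x -> x = y.
Proof.
move=> xy yx; apply: (ancestor_depth_eq xy).
by apply/eqP; rewrite eqn_leq !ancestor_depth.
Qed.

Lemma ancestor_total x y z : anc x z -> anc y z -> anc x y \/ anc y x.
Proof.
move=> [i <-] [j <-]; have [le_ij | /ltnW le_ji] := leqP i j.
  by right; exists (j - i); rewrite -iterD subnK.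
by left; exists (i - j); rewrite -iterD subnK.
Qed.

Lemma ancestor_same_depth x y z : anc x z -> anc y z -> depth x = depth y -> x = y.
Proof.
move=> xz yz dE; have [xy | yx] := ancestor_total xz yz; first exact: ancestor_depth_eq.
exact/esym/ancestor_depth_eq.
Qed.

Lemma ancestor_parent_proper x y : anc x y -> x != y -> anc x (p y).
Proof. by move=> [[|k] <-]; rewrite ?eqxx // => _; exists k; rewrite iterSr. Qed.

Lemma ancestorP x y : reflect (anc x y) (iter (depth y - depth x) p y == x).
Proof.
apply: (iffP eqP) => [<- | [k <-]]; first by exists (depth y - depth x).
rewrite depth_iter; have [le_ky | lt_yk] := leqP k (depth y); first by rewrite subKn.
have -> : depth y - (depth y - k) = depth y by lia.
by rewrite -(subnK (ltnW lt_yk)) iterD iter_depth iter_root.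
Qed.

Definition hole_top (s : seq V) (d : V) : Prop :=
  exists2 w, w \in s & w != d /\ anc d w.

Lemma mem_child_path a s z : path (fun x y => is_child r p y x) a s ->
  z \in a :: s <-> anc a z /\ anc z (last a s).
Proof.
elim: s a z => [|b s IHs] a z /=.
  move=> _; rewrite inE; split => [/eqP -> | [az za]]; first by split; exact: ancestor_refl.
  by rewrite (ancestor_antisym az za).
case/andP=> /andP [_ /eqP pb] path_bs; have IH z' := IHs b z' path_bs.
have ab : anc a b by rewrite -pb; exact: ancestor_parent.
have /IH [_ b_last] : b \in b :: s := mem_head b s.
rewrite inE; split => [/orP [/eqP -> | /IH [bz zl]] | [az zl]].
- by split; [exact: ancestor_refl | exact: ancestor_trans ab b_last].
- by split; first exact: ancestor_trans ab bz.
have [-> // | z_na] := eqVneq z a.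
have [bz | zb] := ancestor_total b_last zl; first exact/IH.
have [<- | z_nb] := eqVneq z b; first by rewrite mem_head orbT.
by case/eqP: z_na; apply/esym/(ancestor_antisym az); rewrite -pb; exact: ancestor_parent_proper.
Qed.

Section BurlingTree.
Variables (l : V -> V) (c : V -> {set V}).
Hypothesis burling : is_burling_tree r p l c.

Lemma arc_tail_not_last_born x y : y \in c x -> x != r /\ l (p x) != x.
Proof.
case: burling => _ _ _ _ c0 y_in.
have x_nr : x != r by apply/eqP => xE; move: y_in; rewrite c0 ?inE //; left.
by split => //; apply/eqP => lbE; move: y_in; rewrite c0 ?inE //; right.
Qed.

Lemma last_born_sibling x y : y \in c x -> l (p x) != r /\ p (l (p x)) = p x.
Proof.
case: burling => _ _ lb_child _ _ /arc_tail_not_last_born [x_nr _].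
by have /andP [-> /eqP ->] := lb_child (p x) x (introT andP (conj x_nr (eqxx _))).
Qed.

Lemma arc_heads x y : y \in c x ->
  exists b, forall z, z \in c x <-> anc (l (p x)) z /\ anc z b.
Proof.
move=> y_in; have [x_nr lb_nx] := arc_tail_not_last_born y_in.
have [_ _ _ cE _] := burling.
have not_lb : ~ is_last_born r p l x by case=> _ /eqP; exact/negP.
have [s [branch_s [s0 | [s' sE]] cxE]] := cE x x_nr not_lb.
  by move: y_in; rewrite cxE s0 inE.
rewrite sE in branch_s cxE.
by exists (last (l (p x)) s') => z; rewrite cxE inE; exact: mem_child_path.
Qed.

Lemma arc_head_desc x y : y \in c x -> anc (l (p x)) y.
Proof. by move=> y_in; have [b /(_ y) [/(_ y_in) []]] := arc_heads y_in. Qed.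

Lemma arc_heads_total x y z : y \in c x -> z \in c x -> anc y z \/ anc z y.
Proof.
move=> y_in z_in; have [b cxE] := arc_heads y_in.
have [[_ yb] [_ zb]] := (iffLR (cxE y) y_in, iffLR (cxE z) z_in).
exact: ancestor_total yb zb.
Qed.

Lemma arc_heads_convex x y z : y \in c x -> anc (l (p x)) z -> anc z y -> z \in c x.
Proof.
move=> y_in lz zy; have [b cxE] := arc_heads y_in.
have [_ yb] := iffLR (cxE y) y_in.
by apply/cxE; split; last exact: ancestor_trans zy yb.
Qed.

Lemma depth_last_born_sibling x y : y \in c x -> depth (l (p x)) = depth x.
Proof.
move=> y_in; have [[x_nr _] [lb_nr lbE]] := (arc_tail_not_last_born y_in, last_born_sibling y_in).
by rewrite (depth_child lb_nr) (depth_child x_nr) lbE.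
Qed.

Lemma arc_depth x y : y \in c x -> depth x <= depth y.
Proof.
move=> y_in; rewrite -(depth_last_born_sibling y_in).
exact/ancestor_depth/(arc_head_desc y_in).
Qed.

Lemma arc_depth_eq x y : y \in c x -> depth y = depth x -> y = l (p x).
Proof.
move=> y_in dE; apply/esym/ancestor_depth_eq; first exact: arc_head_desc y_in.
by rewrite dE (depth_last_born_sibling y_in).
Qed.

Lemma arc_incomparable x y : y \in c x -> ~ anc x y /\ ~ anc y x.
Proof.
move=> y_in; have [_ /eqP lb_nx] := arc_tail_not_last_born y_in.
have ly := arc_head_desc y_in; have dl := depth_last_born_sibling y_in.
split => [xy | yx]; first exact/lb_nx/(ancestor_same_depth ly xy).
have yE : y = l (p x).
  by apply: (arc_depth_eq y_in); apply/eqP; rewrite eqn_leq (ancestor_depth yx) (arc_depth y_in).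
by apply/lb_nx/ancestor_depth_eq; first rewrite -yE.
Qed.

Lemma arc_asym x y : y \in c x -> x \notin c y.
Proof.
move=> y_in; apply/negP => x_in; have [_ /eqP lb_nx] := arc_tail_not_last_born y_in.
have dE : depth y = depth x by apply/eqP; rewrite eqn_leq !arc_depth.
have := arc_depth_eq x_in (esym dE).
by rewrite (arc_depth_eq y_in dE) (last_born_sibling y_in).2 => /esym /lb_nx.
Qed.

Lemma arc_to_shallower x y : x \in c y -> depth x <= depth y -> x = l (p y) /\ c x = set0.
Proof.
move=> x_in le_xy; have [_ _ _ _ c0] := burling.
have xE : x = l (p y) by apply: (arc_depth_eq x_in); apply/eqP; rewrite eqn_leq le_xy arc_depth.
split=> //; apply: c0; right; have [lb_nr lbE] := last_born_sibling x_in.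
by rewrite /is_last_born xE lbE.
Qed.

Lemma arc_leaves_subtree d x y : anc d x -> ~ anc d y -> y \in c x -> x = d.
Proof.
move=> dx dy y_in; have [/esym // | d_nx] := eqVneq d x.
have [_ lbE] := last_born_sibling y_in.
case: dy; apply: ancestor_trans (ancestor_parent_proper dx d_nx) _.
by rewrite -lbE; exact: ancestor_trans (ancestor_parent _) (arc_head_desc y_in).
Qed.

Lemma arc_enters_subtree d x y : anc d x -> ~ anc d y -> x \in c y -> d \in c y.
Proof.
move=> dx dy x_in; apply: (arc_heads_convex x_in _ dx).
have [dl | //] := ancestor_total dx (arc_head_desc x_in).
have [-> | d_nl] := eqVneq d (l (p y)); first exact: ancestor_refl.
have [_ lbE] := last_born_sibling x_in.
have dp : anc d (p y) by rewrite -lbE; exact: ancestor_parent_proper dl d_nl.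
by case: dy; exact: ancestor_trans dp (ancestor_parent y).
Qed.

Lemma arc_heads_top s x y z : y \in c x -> z \in c x -> y \in s -> z \in s -> y != z ->
  exists t, [/\ t \in c x, t \in s & hole_top s t].
Proof.
move=> y_out z_out y_in z_in y_nz.
have [yz | zy] := arc_heads_total y_out z_out.
  by exists y; split=> //; exists z; rewrite // eq_sym.
by exists z; split=> //; exists y.
Qed.

Variable S : {set V}.
Local Notation A := (Defs.arc c S).
Local Notation U := (uadj c S).

Lemma uadjP x y : U x y -> [/\ x \in S, y \in S & A x y || A y x].
Proof. by case/andP=> _ /orP [] /[dup] /and3P [-> -> _] ->; rewrite ?orbT. Qed.

Lemma uadjC x y : U x y = U y x.
Proof. by rewrite /uadj eq_sym orbC. Qed.

Lemma arc_uadj x y : A x y -> U x y.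
Proof.
move=> xy; rewrite /uadj xy andbT; have /and3P [_ _ /arc_incomparable [xny _]] := xy.
by apply: contra_notN xny => /eqP ->; exact: ancestor_refl.
Qed.

Lemma arc_uadjC x y : A x y -> U y x.
Proof. by rewrite uadjC; exact: arc_uadj. Qed.

Lemma arcS_asym x y : A x y -> ~~ A y x.
Proof. by case/and3P=> _ _ /arc_asym xny; apply/negP => /and3P [_ _]; apply/negP. Qed.

Lemma uadj_incomparable x y : U x y -> ~ anc x y /\ ~ anc y x.
Proof.
by case/uadjP=> _ _ /orP [] /and3P [_ _ /arc_incomparable [no_xy no_yx]].
Qed.

Lemma uadj_leaves_subtree d x y : d \in S -> U x y -> anc d x -> ~ anc d y ->
  x = d \/ A y x /\ A y d.
Proof.
move=> d_in /uadjP [x_in y_in /orP [/and3P [_ _ y_out] | yx]] dx dy.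
  by left; exact: arc_leaves_subtree dx dy y_out.
right; split => //; have /and3P [_ _ x_out] := yx.
by rewrite /Defs.arc y_in d_in (arc_enters_subtree dx dy x_out).
Qed.

(** * The pivot of a hole *)

Section Pivot.
Variables (s : seq V) (d : V).
Hypotheses (hole : is_hole S U s) (d_in : d \in s) (d_top : hole_top s d).

Local Notation k := (size s).
Local Notation g := (hole_walk s d).

Let k_ge4 : 4 <= k := hole_size hole.
Let k_gt0 : 0 < k := leq_trans (isT : 0 < 4) k_ge4.
Let g0 : g 0 = d := hole_walk0 d_in.
Let g_in m : g m \in s := hole_walk_mem hole d_in m.
Let g_adj := hole_walk_adj hole d_in.
Let g_inj := hole_walk_inj hole d_in.
Let d_inS : d \in S. Proof. by case: hole => _ _ sub_s _; exact: sub_s. Qed.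

Lemma walk_neq_top m : 0 < m < k -> g m != d.
Proof.
move=> m_range; apply/eqP => gmE; suff : m = 0 by lia.
by apply: g_inj; rewrite ?gmE ?g0 //; lia.
Qed.

Lemma top_nbr_index m : m < k -> U d (g m) -> m = 1 \/ m = k.-1.
Proof. by rewrite -{1}g0 => lt_mk; rewrite g_adj // /cyc_adj; lia. Qed.

(* An edge leaving the subtree of [d] touches [d] or comes from a neighbour of [d]. *)
Lemma walk_desc_step i j : 0 < i < k -> 1 < j < k.-1 -> cyc_adj k i j ->
  anc d (g i) -> anc d (g j).
Proof.
move=> i_range j_range ij di; case: (ancestorP d (g j)) => // dj.
have gij : U (g i) (g j) by rewrite g_adj //; lia.
have [gi_d | [_ /arc_uadjC gj_nbr]] := uadj_leaves_subtree d_inS gij di dj.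
  by have /eqP := walk_neq_top i_range.
by have := top_nbr_index (_ : j < k) gj_nbr; lia.
Qed.

Lemma walk_interior_desc m : 1 < m < k.-1 -> anc d (g m).
Proof.
have to_g2 j : 1 < j < k.-1 -> anc d (g j) <-> anc d (g 2).
  elim: j => [|j IHj] // j_range; have [-> // | j_ne1] := eqVneq j 1.
  apply: (iff_trans _ (IHj _)); last by lia.
  split=> dj; apply: walk_desc_step dj; rewrite /cyc_adj; lia.
move=> m_range; apply/to_g2 => //.
have [w w_in [w_nd dw]] := d_top; have [m0 lt_m0k gm0E] := hole_walk_onto hole d_in w_in.
have m0_nz : m0 != 0 by apply: contra_neq w_nd => m0E; rewrite -gm0E m0E.
have : ~~ U d w by apply/negP => /uadj_incomparable [].
rewrite -gm0E -{1}g0 g_adj // => m0_nbr.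
by apply/(to_g2 m0); rewrite ?gm0E //; move: m0_nbr; rewrite /cyc_adj; lia.
Qed.

Lemma antenna_arc_interior a j : cyc_adj k 0 a -> cyc_adj k a j -> 0 < j < k ->
  A (g a) (g j) /\ A (g a) d.
Proof.
move=> a_nbr aj j_range; have lt_ak : a < k by move: a_nbr; rewrite /cyc_adj; lia.
have dj : anc d (g j) by apply: walk_interior_desc; move: a_nbr aj; rewrite /cyc_adj; lia.
have da : U d (g a) by rewrite -{1}g0 g_adj.
have [nda _] := uadj_incomparable da.
have ja : U (g j) (g a) by rewrite g_adj // /cyc_adj; move: aj; rewrite /cyc_adj; lia.
have [gj_d | //] := uadj_leaves_subtree d_inS ja dj nda.
by have /eqP := walk_neq_top j_range.
Qed.

Lemma antenna_arc a j : cyc_adj k 0 a -> cyc_adj k a j -> j < k -> A (g a) (g j).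
Proof.
move=> a_nbr aj lt_jk; have [j0 | j_nz] := eqVneq j 0; last first.
  have j_range : 0 < j < k by lia.
  exact: (antenna_arc_interior a_nbr aj j_range).1.
rewrite j0 g0; pose j' := if a == 1 then 2 else k.-2.
have aj' : cyc_adj k a j' by move: a_nbr; rewrite /j' /cyc_adj; case: eqVneq; lia.
have j'_range : 0 < j' < k by rewrite /j'; case: eqVneq; lia.
exact: (antenna_arc_interior a_nbr aj' j'_range).2.
Qed.

Lemma top_sink : hole_sink c S s d.
Proof.
split=> // y /(hole_walk_onto hole d_in) [m lt_mk <-]; apply/negP => dm.
have m_nbr : cyc_adj k 0 m by rewrite -g_adj // g0; exact: arc_uadj.
have m0 : cyc_adj k m 0 by rewrite cyc_adjC.
by have := arcS_asym (antenna_arc m_nbr m0 k_gt0); rewrite g0 dm.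
Qed.

Lemma antenna_source a : cyc_adj k 0 a -> hole_source c S s (g a).
Proof.
move=> a_nbr; split=> // y /(hole_walk_onto hole d_in) [m lt_mk <-]; apply/negP => ma.
have lt_ak : a < k by move: a_nbr; rewrite /cyc_adj; lia.
have am : cyc_adj k a m by rewrite -g_adj // uadjC; exact: arc_uadj.
by have := arcS_asym (antenna_arc a_nbr am lt_mk); rewrite ma.
Qed.

Lemma top_ancestor y : y \in s -> y != g 1 -> y != g k.-1 -> anc d y.
Proof.
case/(hole_walk_onto hole d_in) => m lt_mk <- m_n1 m_nk.
have [-> | m_nz] := eqVneq m 0; first by rewrite g0; exact: ancestor_refl.
have [m1 mk] : m != 1 /\ m != k.-1.
  by split; [apply: contra_neq m_n1 | apply: contra_neq m_nk] => ->.
by apply: walk_interior_desc; lia.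
Qed.

End Pivot.

Lemma top_not_source s d : is_hole S U s -> d \in s -> hole_top s d ->
  ~ hole_source c S s d.
Proof.
move=> hole d_in d_top [_ no_in]; have k_ge4 := hole_size hole.
have a_nbr : cyc_adj (size s) 0 1 by [].
have := no_in _ (hole_walk_mem hole d_in 1).
by rewrite -{2}(hole_walk0 d_in) (antenna_arc hole d_in d_top a_nbr) //; lia.
Qed.

Lemma non_source_desc s d y : is_hole S U s -> d \in s -> hole_top s d ->
  y \in s -> ~ hole_source c S s y -> anc d y.
Proof.
move=> hole d_in d_top y_in y_ns; have k_ge4 := hole_size hole.
by apply: (top_ancestor hole d_in d_top y_in); apply/negP => /eqP yE;
  apply: y_ns; rewrite yE; apply: antenna_source => //; rewrite /cyc_adj; lia.
Qed.

Lemma top_unique s d t : is_hole S U s -> d \in s -> hole_top s d ->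
  t \in s -> hole_top s t -> d = t.
Proof.
move=> hole d_in d_top t_in t_top; apply: ancestor_antisym.
  by apply: (non_source_desc hole d_in d_top t_in); exact: top_not_source.
by apply: (non_source_desc hole t_in t_top d_in); exact: top_not_source.
Qed.

Lemma source_arc_top s d z : is_hole S U s -> d \in s -> hole_top s d ->
  hole_source c S s z -> A z d.
Proof.
move=> hole d_in d_top [z_in no_in]; have k_ge4 := hole_size hole.
have [_ _ sub_s _] := hole; pose g := hole_walk s z.
have out m : cyc_adj (size s) 0 m -> g m \in c z.
  move=> m_nbr; have lt_mk : m < size s by move: m_nbr; rewrite /cyc_adj; lia.
  have /uadjP [_ _] : U (g 0) (g m) by rewrite (hole_walk_adj hole z_in) //; lia.
  by rewrite /g hole_walk0 // (negbTE (no_in _ (hole_walk_mem hole z_in m))) orbF => /and3P [].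
have g1_nk : g 1 != g (size s).-1 by apply/eqP => /(hole_walk_inj hole z_in); lia.
have [g1_out gk_out] : g 1 \in c z /\ g (size s).-1 \in c z.
  by split; apply: out; rewrite /cyc_adj; lia.
have [t [t_out t_in t_top]] := arc_heads_top g1_out gk_out
  (hole_walk_mem hole z_in 1) (hole_walk_mem hole z_in _) g1_nk.
by rewrite /Defs.arc !sub_s // (top_unique hole d_in d_top t_in t_top).
Qed.

Lemma top_is_pivot s d : is_hole S U s -> d \in s -> hole_top s d ->
  is_pivot p c S s d.
Proof.
move=> hole d_in d_top; split; first exact: top_sink.
  by move=> a /(source_arc_top hole d_in d_top); exact: arc_uadjC.
by move=> y; exact: non_source_desc.
Qed.

Lemma hole_has_top s : is_hole S U s -> exists2 d, d \in s & hole_top s d.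
Proof.
move=> hole; have k_ge4 := hole_size hole.
have x0_in : nth r s 0 \in s by apply: mem_nth; exact: leq_trans _ k_ge4.
case: (arg_minnP depth x0_in) => x x_in x_min; pose g := hole_walk s x.
have g_in m : g m \in s := hole_walk_mem hole x_in m.
have gx : g 0 = x := hole_walk0 x_in.
have g_neq m m' : m < size s -> m' < size s -> m != m' -> g m != g m'.
  by move=> lt_mk lt_m'k; apply: contra_neq => /(hole_walk_inj hole x_in); apply.
have g_arc m m' : cyc_adj (size s) m m' -> m < size s -> m' < size s ->
    (g m' \in c (g m)) || (g m \in c (g m')).
  move=> mm' lt_mk lt_m'k; have : U (g m) (g m') by rewrite (hole_walk_adj hole x_in).
  by case/uadjP=> _ _ /orP [] /and3P [_ _ ->]; rewrite ?orbT.
have [x_out | x_nout] := boolP (x \in c (g 1)).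
  have [xE _] := arc_to_shallower x_out (x_min _ (g_in 1)).
  have g2_out : g 2 \in c (g 1).
    have lt_2k : 2 < size s by exact: leq_trans _ k_ge4.
    have /orP [// | g1_out] := g_arc 1 2 isT (ltnW lt_2k) lt_2k.
    have le_12 : depth (g 1) <= depth (g 2).
      by rewrite -(depth_last_born_sibling x_out) -xE; exact: x_min (g_in 2).
    by have [_ cg0] := arc_to_shallower g1_out le_12; move: x_out; rewrite cg0 inE.
  exists x => //; exists (g 2); first exact: g_in.
  by split; [rewrite -gx g_neq; lia | rewrite xE; exact: arc_head_desc g2_out].
have g1_out : g 1 \in c x.
  by move: (g_arc 0 1); rewrite gx (negbTE x_nout) orbF; apply; rewrite /cyc_adj; lia.
have gk_out : g (size s).-1 \in c x.
  have /orP [// | x_out] : (g (size s).-1 \in c x) || (x \in c (g (size s).-1)).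
    by rewrite -gx; apply: g_arc; rewrite /cyc_adj; lia.
  have [_ cx0] := arc_to_shallower x_out (x_min _ (g_in _)).
  by move: g1_out; rewrite cx0 inE.
have g1_nk : g 1 != g (size s).-1 by rewrite g_neq; lia.
by have [t [_ t_in t_top]] := arc_heads_top g1_out gk_out (g_in 1) (g_in _) g1_nk; exists t.
Qed.

Lemma sink_not_source s x : is_hole S U s -> hole_sink c S s x -> ~ hole_source c S s x.
Proof.
move=> hole [x_in no_out] [_ no_in]; have k_ge4 := hole_size hole.
have y_in := hole_walk_mem hole x_in 1.
have : U x (hole_walk s x 1).
  by rewrite -{1}(hole_walk0 x_in) (hole_walk_adj hole x_in) //; lia.
by case/uadjP=> _ _ /orP [] xy; [move: (no_out _ y_in) | move: (no_in _ y_in)]; rewrite xy.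
Qed.

Lemma pivot_unique s x y : is_hole S U s -> is_pivot p c S s x -> is_pivot p c S s y -> x = y.
Proof.
move=> hole [x_sink _ x_anc] [y_sink _ y_anc]; apply: ancestor_antisym.
  by apply: x_anc; [case: y_sink | exact: sink_not_source].
by apply: y_anc; [case: x_sink | exact: sink_not_source].
Qed.

Lemma source_transfer s s' z : hole_source c S s z -> z \in s' ->
  (forall y, U z y -> y \in s) -> hole_source c S s' z.
Proof.
move=> [_ no_in] z_in' nbr_in; split=> // y _; apply/negP => yz.
by have := no_in y (nbr_in y (arc_uadjC yz)); rewrite yz.
Qed.

Lemma hole_two_antennas s : is_hole S U s ->
  exists t a b, [/\ a != b, hole_source c S s a, hole_source c S s b, A a t & A b t].
Proof.
move=> hole; have k_ge4 := hole_size hole; have [t t_in t_top] := hole_has_top hole.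
have [a1 ak] : cyc_adj (size s) 0 1 /\ cyc_adj (size s) 0 (size s).-1 by rewrite /cyc_adj; lia.
exists t, (hole_walk s t 1), (hole_walk s t (size s).-1); split.
- by apply/eqP => /(hole_walk_inj hole t_in); lia.
- exact: antenna_source.
- exact: antenna_source.
- by rewrite -{2}(hole_walk0 t_in); apply: antenna_arc => //; rewrite /cyc_adj; lia.
- by rewrite -{2}(hole_walk0 t_in); apply: antenna_arc => //; rewrite /cyc_adj; lia.
Qed.

(** * Holes of a long theta *)

Lemma theta_apex_arcs u v P1 P2 P3 t a b : long_theta_paths S U u v P1 P2 P3 ->
  a != b -> a \in [:: u; v] -> b \in [:: u; v] -> A a t -> A b t -> False.
Proof.
move=> theta a_nb a_uv b_uv /arc_uadjC ta /arc_uadjC tb.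
have [/andP [t_na _] /andP [t_nb _]] := (ta, tb); have /uadjP [tS _ _] := ta.
move: a_nb ta tb t_na t_nb; rewrite !inE in a_uv b_uv.
case/orP: a_uv => /eqP ->; case/orP: b_uv => /eqP ->; rewrite ?eqxx // => _.
- by move=> tu tv t_nu t_nv; exact: (theta_no_common_nbr theta tS t_nu t_nv tu tv).
- by move=> tv tu t_nv t_nu; exact: (theta_no_common_nbr theta tS t_nu t_nv tu tv).
Qed.

Lemma theta_source_transfer u v P1 P2 P3 s s' z : long_theta_paths S U u v P1 P2 P3 ->
  z \in P1 -> {subset u :: P1 ++ [:: v] <= s} -> z \in s' ->
  hole_source c S s z -> hole_source c S s' z.
Proof.
move=> theta z1 path_s z_in' z_src; apply: (source_transfer z_src z_in') => y zy.
have /uadjP [_ yS _] := zy; exact/path_s/(theta_path1_nbr theta z1 yS zy).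
Qed.

Lemma cycle_sources_on_path1 u v P1 P2 P3 Q d w z : long_theta_paths S U u v P1 P2 P3 ->
  d \in P1 -> w \in u :: P1 ++ [:: v] -> w != d -> anc d w ->
  is_hole S U (u :: P1 ++ v :: rev Q) -> hole_source c S (u :: P1 ++ v :: rev Q) z ->
  z \in u :: P1 ++ [:: v].
Proof.
move=> theta d1 w1 w_nd dw hole z_src.
have dC : d \in u :: P1 ++ v :: rev Q by rewrite mem_cycle_cat d1 orbT.
have d_top : hole_top (u :: P1 ++ v :: rev Q) d by exists w; rewrite ?path_sub_cycle_l.
have zd := source_arc_top hole dC d_top z_src; have /and3P [zS _ _] := zd.
exact: (theta_path1_nbr theta d1 zS (arc_uadjC zd)).
Qed.

Lemma theta_path1_no_proper_desc u v P1 P2 P3 d w :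
  long_theta_paths S U u v P1 P2 P3 -> d \in P1 ->
  w \in u :: P1 ++ [:: v] -> w != d -> anc d w -> False.
Proof.
move=> theta d1 w1 w_nd dw; have on_path1 := cycle_sources_on_path1 theta d1 w1 w_nd dw.
have th132 := long_theta_paths_swap23 theta; have th213 := long_theta_paths_swap12 theta.
have th231 := long_theta_paths_swap23 th213; have th312 := long_theta_paths_swap12 th132.
have apex_sources z : hole_source c S (u :: P2 ++ v :: rev P3) z -> z \in [:: u; v].
  move=> z_src; have [zC _] := z_src; move: zC; rewrite mem_cycle_cat !inE.
  case/or4P=> [-> // | z2 | -> | z3]; rewrite ?orbT //; exfalso.
  - have z_src' : hole_source c S (u :: P1 ++ v :: rev P2) z.
      by apply: (theta_source_transfer th231 z2 _ _ z_src); [exact: path_sub_cycle_l |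
        rewrite mem_cycle_cat z2 !orbT].
    have := on_path1 _ _ (theta_cycle12_hole theta) z_src'.
    by rewrite (negbTE (theta_path2_off_path1 theta z2)).
  - have z_src' : hole_source c S (u :: P1 ++ v :: rev P3) z.
      by apply: (theta_source_transfer th312 z3 _ _ z_src); [exact: path_sub_cycle_r |
        rewrite mem_cycle_cat z3 !orbT].
    have := on_path1 _ _ (theta_cycle12_hole th132) z_src'.
    by rewrite (negbTE (theta_path2_off_path1 th132 z3)).
have [t [a [b [a_nb a_src b_src a_t b_t]]]] := hole_two_antennas (theta_cycle12_hole th231).
exact: (theta_apex_arcs theta a_nb (apex_sources a a_src) (apex_sources b b_src) a_t b_t).
Qed.

Lemma top_notin_path1 u v P1 P2 P3 s d : long_theta_paths S U u v P1 P2 P3 ->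
  is_hole S U s -> d \in s -> hole_top s d -> d \notin P1.
Proof.
move=> theta hole d_in d_top; apply/negP => d1.
have k_ge4 := hole_size hole; pose g := hole_walk s d.
have antenna_apex a a' : cyc_adj (size s) 0 a -> cyc_adj (size s) a a' -> 0 < a' < size s ->
    g a \in [:: u; v] /\ A (g a) d.
  move=> a_nbr aa' a'_range.
  have [ga_a' ga_d] := antenna_arc_interior hole d_in d_top a_nbr aa' a'_range.
  split=> //; have /uadjP [gaS _ _] := arc_uadj ga_d.
  have := theta_path1_nbr theta d1 gaS (arc_uadjC ga_d); rewrite mem_path_cat !inE.
  case/or3P=> [-> // | ga1 | ->]; rewrite ?orbT //; exfalso.
  have /uadjP [_ ga'S _] := arc_uadj ga_a'.
  apply: (theta_path1_no_proper_desc theta d1 (theta_path1_nbr theta ga1 ga'S (arc_uadj ga_a'))).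
    exact: walk_neq_top.
  by apply: walk_interior_desc => //; move: a_nbr aa' a'_range; rewrite /cyc_adj; lia.
have [[g1_uv g1_d] [gk_uv gk_d]] :
    (g 1 \in [:: u; v] /\ A (g 1) d) /\ (g (size s).-1 \in [:: u; v] /\ A (g (size s).-1) d).
  by split; [apply: (antenna_apex 1 2) | apply: (antenna_apex _ (size s).-2)];
    rewrite /cyc_adj; lia.
have g1_nk : g 1 != g (size s).-1 by apply/eqP => /(hole_walk_inj hole d_in); lia.
exact: (theta_apex_arcs theta g1_nk g1_uv gk_uv g1_d gk_d).
Qed.

Lemma top_is_apex u v s d : is_long_theta S U u v ->
  is_hole S U s -> d \in s -> hole_top s d -> d = u \/ d = v.
Proof.
move=> [P1 [P2 [P3 theta]]] hole d_in d_top.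
have dS : d \in S by case: hole => _ _ sub_s _; exact: sub_s.
move: dS; rewrite (theta_memE theta) => /or3P [/eqP -> | /eqP -> | ]; [by left | by right | ].
case/or3P=> dP; exfalso; move: dP; apply/negP.
- exact: (top_notin_path1 theta hole d_in d_top).
- exact: (top_notin_path1 (long_theta_paths_swap12 theta) hole d_in d_top).
- have th312 := long_theta_paths_swap12 (long_theta_paths_swap23 theta).
  exact: (top_notin_path1 th312 hole d_in d_top).
Qed.

End BurlingTree.
End RootedTree.

Theorem lemma6p4 (V : finType) (r : V) (p : V -> V) (l : V -> V)
    (c : V -> {set V}) (S : {set V}) (u v : V) :
  is_burling_tree r p l c ->
  is_long_theta S (uadj c S) u v ->
  forall s : seq V, is_hole S (uadj c S) s ->
    (is_pivot p c S s u /\ ~ is_pivot p c S s v) \/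
    (is_pivot p c S s v /\ ~ is_pivot p c S s u).
Proof.
move=> burling theta s hole; have [p_root ancestor_root _ _ _] := burling.
have [d d_in d_top] := hole_has_top p_root ancestor_root burling hole.
have d_pivot := top_is_pivot p_root ancestor_root burling hole d_in d_top.
have only_d x : x != d -> ~ is_pivot p c S s x.
  by move=> x_nd /(pivot_unique p_root ancestor_root hole d_pivot) dx; rewrite dx eqxx in x_nd.
have [P1 [P2 [P3 /theta_apexes_neq u_nv]]] := theta.
have [dE | dE] := top_is_apex p_root ancestor_root burling theta hole d_in d_top; subst d.
- by left; split=> //; apply: only_d; rewrite eq_sym.
- by right; split=> //; apply: only_d.
Qed.
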